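(* Let $s\in S^{\mathbb{N}}$ be a directive sequence such that (primitivity) for every $n$ there is $k\ge n$ with $M_{[n,k)}>0$ entrywise, and (strong convergence) $\sum_n|||\pi_vM_{[0,n)}|||_1$ converges for some vector $v\in\mathbb{R}_+^{d+1}\setminus\{0\}$. Then for every letter $a\in A$ and every fixed point $u$ of $s$, $$R_a(u_0)=\Big\{\sum_{n=0}^\infty\pi_v(M_{[0,n)}t_n)\ \Big|\ \cdots\xrightarrow{t_n,s_n}\cdots\xrightarrow{t_0,s_0}a \text{ is a left-infinite path in }\mathcal{A}\Big\}.$$ In particular the Rauzy fractal does not depend on the choice of the fixed point $u$, and it is compact.
   Context: $d\ge1$, $A=\{0,\dots,d\}$, $h(y)=\sum_iy_i$, $P=\{h=0\}$; for $v\in\mathbb{R}_+^{d+1}\setminus\{0\}$, $\pi_v(z)=z-h(z)v/h(v)$ is the projection onto $P$ along $v$; $|||\cdot|||_1$ is the $\ell^1$ operator norm. $S$ is a finite set of unimodular substitutions on $A$ (morphisms of $A^*$ with non-empty images of letters, $|\det\mathrm{ab}(\sigma)|=1$, where $\mathrm{ab}$ is abelianization: $\mathrm{ab}(w)$ counts letters of $w$). For $s=(s_k)$: $M_k=\mathrm{ab}(s_k)$, $M_{[k,n)}=M_k\cdots M_{n-1}$. A fixed point of $s$ is $(u_k)$ with $s_k(u_{k+1})=u_k$ for all $k$. Abelianized prefix automaton $\mathcal{A}$: states $A$, transitions $a\xrightarrow{t,\sigma}b$ ($\sigma\in S$, $t\in\mathbb{Z}^{d+1}$) iff $\sigma(a)=pbq$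 for words $p,q$ with $\mathrm{ab}(p)=t$. A left-infinite path $\cdots\xrightarrow{t_n,s_n}\cdots\xrightarrow{t_0,s_0}a$ is a sequence of states $a_0=a,a_1,a_2,\dots$ with $a_{k+1}\xrightarrow{t_k,s_k}a_k$ a transition for all $k$. For an infinite word $w$ and $a\in A$, $W_a(w)=\{\mathrm{ab}(p):pa\text{ prefix of }w\}$, and $R_a(u_0)=\overline{\pi_v(W_a(u_0))}$, the Rauzy fractal being $R(u_0)=\bigcup_aR_a(u_0)$. *)

From HB Require Import structures.
From mathcomp Require Import all_boot all_order all_algebra.
From mathcomp Require Import all_classical all_reals all_analysis.
Set Implicit Arguments. Unset Strict Implicit. Unset Printing Implicit Defensive.
Import Order.TTheory GRing.Theory Num.Theory.
Import numFieldNormedType.Exports.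
Local Open Scope classical_set_scope.
Local Open Scope ring_scope.

(* Alphabet A = {0,...,d} is 'I_d.+1.  A substitution is a map from letters to words. *)
Definition subst (d : nat) := {ffun 'I_d.+1 -> seq 'I_d.+1}.

Definition subst_word (d : nat) (sigma : subst d) (w : seq 'I_d.+1) : seq 'I_d.+1 :=
  flatten (map sigma w).

Definition abv (R : realType) (d : nat) (w : seq 'I_d.+1) : 'cV[R]_d.+1 :=
  \col_b (count_mem b w)%:R.

Definition abmx (R : realType) (d : nat) (sigma : subst d) : 'M[R]_d.+1 :=
  \matrix_(b, a) (count_mem b (sigma a))%:R.

Definition unimodular (R : realType) (d : nat) (sigma : subst d) : Prop :=
  (forall a, sigma a != [::]) /\ `|\det (abmx R sigma)| = 1.

Definition Mprod (R : realType) (d : nat) (s : nat -> subst d) (n k : nat) : 'M[R]_d.+1 :=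
  \prod_(n <= i < k) abmx R (s i).

Definition hsum (R : realType) (d : nat) (y : 'cV[R]_d.+1) : R := \sum_i y i ord0.

(* projection onto P = {h = 0} along v, as a matrix: pi_v z = z - h(z) v / h(v) *)
Definition pimx (R : realType) (d : nat) (v : 'cV[R]_d.+1) : 'M[R]_d.+1 :=
  1%:M - (hsum v)^-1 *: (v *m const_mx 1).

Definition piv (R : realType) (d : nat) (v : 'cV[R]_d.+1) (z : 'cV[R]_d.+1) : 'cV[R]_d.+1 :=
  pimx v *m z.

(* l^1 operator norm of a matrix = maximal absolute column sum *)
Definition opnorm1 (R : realType) (m n : nat) (B : 'M[R]_(m, n)) : R :=
  \big[Num.max/0]_(j < n) \sum_(i < m) `|B i j|.

(* sigma(w) = w' for infinite words (w' is the concatenation of the sigma(w_i)) *)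
Definition subst_inf_eq (d : nat) (sigma : subst d) (w w' : nat -> 'I_d.+1) : Prop :=
  forall n i, (i < size (subst_word sigma (mkseq w n)))%N ->
    nth ord0 (subst_word sigma (mkseq w n)) i = w' i.

Definition fixed_point (d : nat) (s : nat -> subst d) (u : nat -> nat -> 'I_d.+1) : Prop :=
  forall k, subst_inf_eq (s k) (u k.+1) (u k).

Definition Wset (R : realType) (d : nat) (w : nat -> 'I_d.+1) (a : 'I_d.+1) : set 'cV[R]_d.+1 :=
  [set abv R (mkseq w n) | n in [set n | w n = a]].

Definition Rauzy_a (R : realType) (d : nat) (v : 'cV[R]_d.+1) (w : nat -> 'I_d.+1)
  (a : 'I_d.+1) : set 'cV[R]_d.+1 :=
  closure (piv v @` Wset w a).

Definition Rauzy (R : realType) (d : nat) (v : 'cV[R]_d.+1) (w : nat -> 'I_d.+1)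
  : set 'cV[R]_d.+1 :=
  \bigcup_(a in [set: 'I_d.+1]) Rauzy_a v w a.

Definition transition (R : realType) (d : nat) (b : 'I_d.+1) (t : 'cV[R]_d.+1)
  (sigma : subst d) (a : 'I_d.+1) : Prop :=
  exists p q : seq 'I_d.+1, sigma b = p ++ a :: q /\ t = abv R p.

Definition left_inf_path (R : realType) (d : nat) (s : nat -> subst d)
  (st : nat -> 'I_d.+1) (t : nat -> 'cV[R]_d.+1) (a : 'I_d.+1) : Prop :=
  st 0%N = a /\ forall k, transition (st k.+1) (t k) (s k) (st k).

Definition path_sums (R : realType) (d : nat) (s : nat -> subst d) (v : 'cV[R]_d.+1)
  (a : 'I_d.+1) : set 'cV[R]_d.+1 :=
  [set x | exists (st : nat -> 'I_d.+1) (t : nat -> 'cV[R]_d.+1),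
     left_inf_path s st t a /\
     series (fun n => piv v (Mprod R s 0 n *m t n)) @ \oo --> x].

(* The prefix p of u_0 in front of an occurrence of a desubstitutes along the
   fixed point, p = s_0(p_1) t_0, p_1 = s_1(p_2) t_1, ..., into a left-infinite
   path of the prefix automaton ending in a; its sum is pi_v(ab(p)) because the
   remainder pi_v M_[0,n) ab(p_n) tends to 0 by strong convergence.  Conversely,
   primitivity realises every finite piece of a path inside u_0, and since images
   of letters have length at most L, paths sharing their first N labels have sums
   within 2 L sum_(n >= N) |||pi_v M_[0,n)|||_1.  So both inclusions hold up to
   closure, and the set of path sums is closed by a Koenig argument (a path has
   finitely many one-step extensions) and bounded, hence compact. *)

From HB Require Import structures.
From mathcomp Require Import all_boot all_order all_algebra.
From mathcomp Require Import all_classical all_reals all_analysis.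
Import Order.TTheory GRing.Theory Num.Theory.
Import numFieldNormedType.Exports.
Local Open Scope classical_set_scope.
Local Open Scope ring_scope.
Set Implicit Arguments. Unset Strict Implicit. Unset Printing Implicit Defensive.

(* Makes matrices visible to [normed_cvg] as a complete normed module. *)
HB.instance Definition _ (R : realType) (m n : nat) := Complete.on 'M[R]_(m, n).

Section SubstitutionWords.
Variables (d : nat) (sg : subst d).
Implicit Types (w : nat -> 'I_d.+1) (x y : seq 'I_d.+1).

Lemma subst_word_cat x y : subst_word sg (x ++ y) = subst_word sg x ++ subst_word sg y.
Proof. by rewrite /subst_word map_cat flatten_cat. Qed.

Lemma subst_word_mkseqS w q :
  subst_word sg (mkseq w q.+1) = subst_word sg (mkseq w q) ++ sg (w q).
Proof.
by rewrite /mkseq -[q.+1]addn1 iotaD map_cat subst_word_cat /subst_word /= cats0.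
Qed.

Lemma subst_inf_eq_mkseq w w' q n : subst_inf_eq sg w w' ->
  (n <= size (subst_word sg (mkseq w q)))%N ->
  mkseq w' n = take n (subst_word sg (mkseq w q)).
Proof.
move=> ww' hn; apply: (@eq_from_nth _ ord0); first by rewrite size_mkseq size_takel.
move=> i; rewrite size_mkseq => hi.
by rewrite nth_mkseq // nth_take // ww' // (leq_trans hi).
Qed.

Lemma subst_inf_eq_cat w w' q P a Q : subst_inf_eq sg w w' -> sg (w q) = P ++ a :: Q ->
  let p := (size (subst_word sg (mkseq w q)) + size P)%N in
  w' p = a /\ mkseq w' p = subst_word sg (mkseq w q) ++ P.
Proof.
move=> ww' wq p; have wq1 := subst_word_mkseqS w q; rewrite wq in wq1.
have hp : (p < size (subst_word sg (mkseq w q.+1)))%N.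
  by rewrite wq1 !size_cat /= ltn_add2l addnS ltnS leq_addr.
split; first by rewrite -(ww' _ _ hp) wq1 catA nth_cat size_cat ltnn subnn.
by rewrite (subst_inf_eq_mkseq ww' (ltnW hp)) wq1 catA take_size_cat // size_cat.
Qed.

Hypothesis sg_ne : forall b, sg b != [::].

Lemma size_subst_word_mkseq w q : (q <= size (subst_word sg (mkseq w q)))%N.
Proof.
elim: q => // q ih; rewrite subst_word_mkseqS size_cat -addn1 leq_add // lt0n.
by rewrite size_eq0.
Qed.

Fixpoint desub w p : nat * nat :=
  if p is p'.+1 then
    let: (q, j) := desub w p' in
    if (j.+1 < size (sg (w q)))%N then (q, j.+1) else (q.+1, 0%N)
  else (0%N, 0%N).

Lemma desubP w p : ((desub w p).2 < size (sg (w (desub w p).1)))%N /\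
  p = (size (subst_word sg (mkseq w (desub w p).1)) + (desub w p).2)%N.
Proof.
elim: p => [|p]; first by rewrite /= lt0n size_eq0 sg_ne.
rewrite /=; case: (desub w p) => q j /= [jq ->].
case: ifP => /= [-> | /negbT]; first by rewrite addnS.
rewrite -leqNgt => qj; have jq' : j.+1 = size (sg (w q)) by apply/eqP; rewrite eqn_leq jq.
by rewrite lt0n size_eq0 sg_ne subst_word_mkseqS size_cat -jq' addn0 addnS.
Qed.

Lemma desub_fst_le w p : ((desub w p).1 <= p)%N.
Proof.
have [_ {2}->] := desubP w p.
exact: leq_trans (size_subst_word_mkseq _ _) (leq_addr _ _).
Qed.

Definition desub_prefix w p : seq 'I_d.+1 := take (desub w p).2 (sg (w (desub w p).1)).

Lemma subst_inf_eq_desub w w' p : subst_inf_eq sg w w' ->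
  exists Q, sg (w (desub w p).1) = desub_prefix w p ++ w' p :: Q /\
    mkseq w' p = subst_word sg (mkseq w (desub w p).1) ++ desub_prefix w p.
Proof.
move=> ww'; have [hj hp] := desubP w p.
set q := (desub w p).1 in hj hp *; set j := (desub w p).2 in hj hp *.
have wq : sg (w q) = take j (sg (w q)) ++ nth ord0 (sg (w q)) j :: drop j.+1 (sg (w q)).
  by rewrite -drop_nth // cat_take_drop.
have := subst_inf_eq_cat ww' wq; rewrite size_takel ?(ltnW hj) // -hp => -[wp ->].
by exists (drop j.+1 (sg (w q))); rewrite wp.
Qed.

End SubstitutionWords.

Section Abelianization.
Variables (R : realType) (d : nat).
Implicit Types (sg : subst d) (x y : seq 'I_d.+1).

Lemma abv_nil : abv R [::] = 0 :> 'cV[R]_d.+1.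
Proof. by apply/matrixP => i j; rewrite !mxE. Qed.

Lemma abv_cat x y : abv R (x ++ y) = abv R x + abv R y.
Proof. by apply/matrixP => i j; rewrite !mxE count_cat natrD. Qed.

Lemma abv_ge0 x i j : 0 <= abv R x i j.
Proof. by rewrite mxE ler0n. Qed.

Lemma abv_seq1 (b : 'I_d.+1) : abv R [:: b] = delta_mx b 0.
Proof. by apply/matrixP => i j; rewrite !mxE /= ord1 eqxx andbT addn0 eq_sym. Qed.

Lemma abv_subst_word sg x : abv R (subst_word sg x) = abmx R sg *m abv R x.
Proof.
elim: x => [|b x ih]; first by rewrite abv_nil mulmx0.
rewrite -cat1s subst_word_cat abv_cat ih abv_cat mulmxDr abv_seq1 -colE.
by rewrite /subst_word /= cats0; congr (_ + _); apply/matrixP => i j; rewrite !mxE.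
Qed.

Lemma hsum_abv x : hsum (abv R x) = (size x)%:R.
Proof.
rewrite /hsum; under eq_bigr do rewrite mxE.
elim: x => [|b x ih]; first by rewrite big1.
under eq_bigr do rewrite -cat1s count_cat natrD.
rewrite big_split /= ih (bigD1 b) //= eqxx big1 => [|i /negbTE]; last by rewrite eq_sym => ->.
by rewrite addr0 -natr1 addrC.
Qed.

Lemma Mprod_id (s : nat -> subst d) n : Mprod R s n n = 1.
Proof. by rewrite /Mprod big_geq. Qed.

Lemma MprodSr (s : nat -> subst d) m n : (m <= n)%N ->
  Mprod R s m n.+1 = Mprod R s m n *m abmx R (s n).
Proof. by move=> mn; rewrite /Mprod big_nat_recr. Qed.

Lemma MprodSl (s : nat -> subst d) m n : (m < n)%N ->
  Mprod R s m n = abmx R (s m) *m Mprod R s m.+1 n.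
Proof. by move=> mn; rewrite /Mprod big_ltn. Qed.

End Abelianization.

Section MatrixNorms.
Variable R : realType.

Lemma mx_norm_entry_le m n (A : 'M[R]_(m, n)) i j : `|A i j| <= `|A|.
Proof.
rewrite [leRHS]/Num.norm /= mx_normrE.
exact: (le_bigmax _ (fun ij : 'I_m * 'I_n => `|A ij.1 ij.2|) (i, j)).
Qed.

Lemma mx_norm_le m n (A : 'M[R]_(m, n)) (b : R) :
  0 <= b -> (forall i j, `|A i j| <= b) -> `|A| <= b.
Proof.
by move=> b0 Ab; rewrite [leLHS]/Num.norm /= mx_normrE; apply: bigmax_le => // ij _.
Qed.

Lemma mx_norm_trmx m n (A : 'M[R]_(m, n)) : `|A^T| = `|A|.
Proof.
apply/eqP; rewrite eq_le; apply/andP; split; apply: mx_norm_le => // i j.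
  by rewrite mxE; apply: mx_norm_entry_le.
by have := mx_norm_entry_le A^T j i; rewrite mxE.
Qed.

Lemma trmx_continuous m n : continuous (@trmx R m n).
Proof.
move=> A B /= /(nbhs_ballP A^T) [e e0 eB]; apply/nbhs_ballP; exists e => //= A' [_ AA'].
by apply: eB; split => // i j; rewrite !mxE; apply: AA'.
Qed.

Lemma cV_bounded_closed_compact n (A : set 'cV[R]_n) (b : R) :
  closed A -> (forall x, A x -> `|x| <= b) -> compact A.
Proof.
move=> cA Ab; pose A' := [set y : 'rV[R]_n | A y^T].
have cA' : closed A' := preimage_closed (in1W (@trmx_continuous 1 n)) cA.
have bA' : bounded_set A'.
  exists b; split => [|M bM y /Ab yb]; first by rewrite num_real.
  by have := le_trans yb (ltW bM); rewrite mx_norm_trmx.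
have -> : A = trmx @` A'.
  by apply/seteqP; split => [x Ax|_ [y Ay <-] //]; exists x^T; rewrite /A' /= trmxK.
apply: continuous_compact (bounded_closed_compact bA' cA').
by apply: continuous_subspaceT => y; apply: trmx_continuous.
Qed.

Lemma opnorm1_ge0 m n (B : 'M[R]_(m, n)) : 0 <= opnorm1 B.
Proof. by apply/bigmax_geP; left. Qed.

Lemma norm_mulmx_le_opnorm1 m n (B : 'M[R]_(m, n)) (x : 'cV[R]_n) :
  (forall j, 0 <= x j ord0) -> `|B *m x| <= opnorm1 B * \sum_j x j ord0.
Proof.
move=> x0; apply: mx_norm_le => [|i k]; first by rewrite mulr_ge0 ?opnorm1_ge0 ?sumr_ge0.
rewrite mxE ord1 mulr_sumr; apply: le_trans (ler_norm_sum _ _ _) _.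
apply: ler_sum => j _; rewrite normrM (ger0_norm (x0 j)) ler_wpM2r //.
apply: le_trans (le_bigmax _ (fun j => \sum_i `|B i j|) j).
by rewrite (bigD1 i) //= lerDl sumr_ge0.
Qed.

End MatrixNorms.

Lemma closure_bigcup_finite (T : topologicalType) (I : finType) (A : I -> set T) (x : T) :
  closure (\bigcup_(i in [set: I]) A i) x -> exists i, closure (A i) x.
Proof.
move=> Ax; apply: contrapT => /forallNP nAx.
have : \forall y \near x, forall i, ~ A i y.
  apply: filter_forall => i; have /existsNP[B /not_implyP[Bx AB]] := nAx i.
  by apply: filterS Bx => y By Ay; apply: AB; exists y.
by move=> /Ax [y [[i _ Aiy] /(_ i)]].
Qed.

Lemma norm_limn_series_le (R : realType) (V : normedModType R) (f : V ^nat) (b : R ^nat)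
    (K : R) (N : nat) :
  cvgn (series f) -> cvgn (series b) -> (forall n, 0 <= b n) -> 0 <= K ->
  (forall n, (n < N)%N -> f n = 0) -> (forall n, `|f n| <= K * b n) ->
  `|limn (series f)| <= K * (limn (series b) - series b N).
Proof.
move=> cf cb b0 K0 f0 fb.
have cnf : (fun M => `|series f M|) @ \oo --> `|limn (series f)| by apply: cvg_norm.
rewrite -(cvg_lim _ cnf) //; apply: limr_le; first by apply/cvg_ex; exists `|limn (series f)|.
near=> M; rewrite /series /=.
apply: le_trans (ler_norm_sum _ _ _) _.
apply: (@le_trans _ _ (\sum_(0 <= n < N + M) `|f n|)).
  by rewrite [leRHS](big_cat_nat (n := M)) ?leq_addl //= lerDl sumr_ge0.
rewrite (big_cat_nat (n := N)) ?leq_addr //= big1_seq ?add0r; last first.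
  by move=> n /andP[_]; rewrite mem_index_iota => /andP[_ /f0 ->]; rewrite normr0.
apply: le_trans (ler_sum _ (fun n _ => fb n)) _.
rewrite -mulr_sumr ler_wpM2l // lerBrDr.
have bup : nondecreasing_seq (series b) by apply: nondecreasing_series => n _ _.
have := nondecreasing_cvgn_le bup cb (N + M).
by rewrite /series /= (big_cat_nat (n := N)) ?leq_addr // addrC.
Unshelve. all: by end_near.
Qed.

Lemma closure_normP (R : realType) (V : normedModType R) (A : set V) (x : V) :
  closure A x <-> forall e, 0 < e -> exists2 y, A y & `|x - y| < e.
Proof.
split=> [Ax e e0 | Ae B /nbhs_normP [e e0 eB]].
  by have [y [Ay]] := Ax _ (nbhsx_ballx x e e0); rewrite -ball_normE; exists y.
by have [y Ay xy] := Ae e e0; exists y; split => //; apply: eB.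
Qed.

Definition prefix_agree (T1 T2 : Type) (N : nat) (g g' : (nat -> T1) * (nat -> T2)) : Prop :=
  (forall n, (n <= N)%N -> g'.1 n = g.1 n) /\ (forall n, (n < N)%N -> g'.2 n = g.2 n).

Lemma prefix_agree_diagonal (T1 T2 : Type) (gs : nat -> (nat -> T1) * (nat -> T2)) :
  (forall N, prefix_agree N (gs N) (gs N.+1)) ->
  forall N, prefix_agree N (gs N) (fun n => (gs n).1 n, fun n => (gs n.+1).2 n).
Proof.
move=> ag; have agM N M : (N <= M)%N -> prefix_agree N (gs N) (gs M).
  elim: M => [|M ih]; first by rewrite leqn0 => /eqP ->.
  rewrite leq_eqVlt ltnS => /predU1P[-> // | NM]; have [ih1 ih2] := ih NM.
  have [h1 h2] := ag M; split=> n nN.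
    by rewrite h1 ?ih1 // (leq_trans nN).
  by rewrite h2 ?ih2 // (leq_trans nN).
move=> N; split=> n nN /=; first by rewrite (agM n N nN).1.
by rewrite (agM n.+1 N nN).2.
Qed.

Definition splice T (k : nat) (f g : nat -> T) n : T := if (n < k)%N then f n else g n.

Section FixedPoint.
Variables (R : realType) (d : nat) (s : nat -> subst d) (u : nat -> nat -> 'I_d.+1).
Hypothesis u_fix : fixed_point s u.
Arguments u_fix : clear implicits.
Local Notation V := 'cV[R]_d.+1.

Lemma fixed_point_abv_prefix n i q : exists p,
  abv R (mkseq (u n) p) = Mprod R s n (n + i) *m abv R (mkseq (u (n + i)) q).
Proof.
elim: i n => [|i ih] n; first by exists q; rewrite addn0 Mprod_id mul1mx.
have [p up] := ih n.+1; rewrite -addSnnS.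
exists (size (subst_word (s n) (mkseq (u n.+1) p))).
rewrite (subst_inf_eq_mkseq (u_fix n) (leqnn _)) take_size abv_subst_word up mulmxA.
by rewrite -MprodSl // addSn ltnS leq_addr.
Qed.

Lemma fixed_point_letter n k : (n <= k)%N -> (forall i j, 0 < Mprod R s n k i j) ->
  forall b, exists p, u n p = b.
Proof.
move=> nk Mpos b; have [p up] := fixed_point_abv_prefix n (k - n) 1.
rewrite subnKC // /mkseq /= abv_seq1 -colE in up.
have : 0 < abv R (mkseq (u n) p) b ord0 by rewrite up mxE Mpos.
by rewrite mxE ltr0n -has_count has_pred1 => /mapP[i _ ->]; exists i.
Qed.

Lemma path_prefix_in_fixed_point st t a N m : left_inf_path s st t a -> u N m = st N ->
  exists p, u 0%N p = a /\ abv R (mkseq (u 0%N) p) =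
    \sum_(0 <= n < N) Mprod R s 0 n *m t n + Mprod R s 0 N *m abv R (mkseq (u N) m).
Proof.
move=> [<- st_tr] uNm.
suff /(_ 0%N N erefl) : forall k i, (k + i = N)%N -> exists p, u k p = st k /\
    Mprod R s 0 k *m abv R (mkseq (u k) p) =
    \sum_(k <= n < N) Mprod R s 0 n *m t n + Mprod R s 0 N *m abv R (mkseq (u N) m).
  by move=> [p [up <-]]; exists p; rewrite Mprod_id mul1mx.
move=> + i; elim: i => [|i ih] k kiN.
  by rewrite addn0 in kiN; subst N; exists m; rewrite big_geq ?add0r.
have [p [up IH]] := ih k.+1 (etrans (addSnnS k i) kiN).
have [P [Q [stk tk]]] := st_tr k; rewrite -up in stk.
have [ukp ukpE] := subst_inf_eq_cat (u_fix k) stk.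
exists (size (subst_word (s k) (mkseq (u k.+1) p)) + size P)%N; split => //.
have kN : (k < N)%N by rewrite -kiN addnS ltnS leq_addr.
rewrite ukpE abv_cat abv_subst_word mulmxDr mulmxA -MprodSr // IH -tk.
by rewrite (big_ltn kN) addrC addrA.
Qed.

Hypothesis s_ne : forall n b, s n b != [::].

(* Desubstitution of position m of u_k: [dpos k m n] is the corresponding
   position in u_n for n >= k (and m for n <= k), [dlabel k m n] the label of
   the step from level n.+1 to level n. *)
Fixpoint dpos (k m n : nat) : nat :=
  if n is n'.+1 then
    if (n' < k)%N then m else (desub (s n') (u n'.+1) (dpos k m n')).1
  else m.

Definition dlabel k m n : V := abv R (desub_prefix (s n) (u n.+1) (dpos k m n)).

Lemma dpos_small k m n : (n <= k)%N -> dpos k m n = m.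
Proof. by case: n => //= n nk; rewrite nk. Qed.

Lemma dposS k m n : (k <= n)%N -> dpos k m n.+1 = (desub (s n) (u n.+1) (dpos k m n)).1.
Proof. by move=> kn /=; rewrite ltnNge kn. Qed.

Lemma dpos_le k m n : (dpos k m n <= m)%N.
Proof.
elim: n => //= n ih; case: ifP => // _.
exact: leq_trans (desub_fst_le (s_ne n) _ _) ih.
Qed.

Lemma dpos_step k m n : (k <= n)%N ->
  transition (u n.+1 (dpos k m n.+1)) (dlabel k m n) (s n) (u n (dpos k m n)) /\
  abv R (mkseq (u n) (dpos k m n)) =
    abmx R (s n) *m abv R (mkseq (u n.+1) (dpos k m n.+1)) + dlabel k m n.
Proof.
move=> kn; rewrite dposS //.
have [Q [sq ->]] := subst_inf_eq_desub (s_ne n) (dpos k m n) (u_fix n).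
rewrite abv_cat abv_subst_word; split => //.
by exists (desub_prefix (s n) (u n.+1) (dpos k m n)), Q.
Qed.

Lemma dpos_telescope k m i :
  Mprod R s 0 k *m abv R (mkseq (u k) m) =
  Mprod R s 0 (k + i) *m abv R (mkseq (u (k + i)) (dpos k m (k + i))) +
  \sum_(k <= n < k + i) Mprod R s 0 n *m dlabel k m n.
Proof.
elim: i => [|i ->]; first by rewrite addn0 big_geq // addr0 dpos_small.
rewrite addnS big_nat_recr ?leq_addr //= (dpos_step m (leq_addr i k)).2.
by rewrite mulmxDr mulmxA -MprodSr ?leq_addr // addrAC -addrA.
Qed.

Lemma left_inf_path_splice k m st t a : st 0%N = a -> st k = u k m ->
  (forall n, (n < k)%N -> transition (st n.+1) (t n) (s n) (st n)) ->
  left_inf_path s (splice k st (fun n => u n (dpos k m n))) (splice k t (dlabel k m)) a.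
Proof.
move=> st0 stk st_tr; split.
  by rewrite /splice; case: ltnP => // /[!leqn0] /eqP k0; subst k; rewrite -st0 stk.
move=> n; rewrite /splice; case: (ltnP n k) => [nk | kn]; last first.
  by rewrite ltnNge (leq_trans kn) //; apply: (dpos_step m kn).1.
case: ltnP => [|kn1]; first by move=> _; apply: st_tr.
have kn : k = n.+1 by apply/eqP; rewrite eqn_leq nk kn1.
by rewrite dpos_small -?kn // -stk kn; apply: st_tr; rewrite -kn.
Qed.

End FixedPoint.

Section PathSums.
Variables (R : realType) (d : nat) (s : nat -> subst d) (v : 'cV[R]_d.+1) (L : nat).
Local Notation V := 'cV[R]_d.+1.
Hypothesis s_le : forall n b, (size (s n b) <= L)%N.
Let c n := opnorm1 (pimx v *m Mprod R s 0 n).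
Hypothesis c_sum : cvgn (series c).
Let tail N := limn (series c) - series c N.

Definition path_term (t : nat -> V) n : V := piv v (Mprod R s 0 n *m t n).

Definition path_sum (t : nat -> V) : V := limn (series (path_term t)).

Let c_ge0 n : 0 <= c n := opnorm1_ge0 _.

Lemma norm_piv_Mprod_abv n x : `|piv v (Mprod R s 0 n *m abv R x)| <= c n * (size x)%:R.
Proof. by rewrite /piv mulmxA -hsum_abv; apply: norm_mulmx_le_opnorm1 => j; apply: abv_ge0. Qed.

Lemma norm_path_term st t a n : left_inf_path s st t a -> `|path_term t n| <= L%:R * c n.
Proof.
move=> [_ /(_ n) [P [Q [sn tn]]]]; rewrite /path_term tn mulrC.
apply: le_trans (norm_piv_Mprod_abv n P) _; rewrite ler_wpM2l ?c_ge0 // ler_nat.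
by apply: leq_trans (s_le n (st n.+1)); rewrite sn size_cat leq_addr.
Qed.

Lemma path_series_cvg st t a : left_inf_path s st t a -> cvgn (series (path_term t)).
Proof.
move=> p; apply: normed_cvg; apply: (series_le_cvg (v_ := L%:R *: c)) => //= n.
- by rewrite mulr_ge0 ?c_ge0.
- exact: norm_path_term p.
- exact: is_cvg_seriesZ.
Qed.

Lemma path_sumsE a x :
  path_sums s v a x <-> exists st t, left_inf_path s st t a /\ x = path_sum t.
Proof.
split=> [[st [t [p tx]]] | [st [t [p ->]]]]; exists st, t; split => //.
  by rewrite /path_sum (cvg_lim _ tx).
exact: path_series_cvg p.
Qed.

Lemma norm_path_sum_le st t a : left_inf_path s st t a ->
  `|path_sum t| <= L%:R * limn (series c).
Proof.
move=> p; have c0 : series c 0 = 0 by rewrite /series /= big_geq.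
have := norm_limn_series_le (N := 0%N) (path_series_cvg p) c_sum c_ge0 (ler0n _ L).
by rewrite c0 subr0; apply => // n; apply: norm_path_term p.
Qed.

Lemma path_sum_dist st t a st' t' a' N :
  left_inf_path s st t a -> left_inf_path s st' t' a' -> (forall n, (n < N)%N -> t n = t' n) ->
  `|path_sum t - path_sum t'| <= 2 * L%:R * tail N.
Proof.
move=> p p' tt'.
have sB : series (path_term t - path_term t') = series (path_term t) - series (path_term t').
  by apply/funext => M; rewrite /series /= sumrB.
have cB : series (path_term t - path_term t') @ \oo --> path_sum t - path_sum t'.
  by rewrite sB; apply: cvgB; [apply: path_series_cvg p | apply: path_series_cvg p'].
rewrite -(cvg_lim _ cB) //; apply: (norm_limn_series_le _ c_sum c_ge0) => //.
- by apply/cvg_ex; exists (path_sum t - path_sum t').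
- by move=> n nN; rewrite !fctE /path_term tt' // subrr.
move=> n; rewrite fctE; apply: le_trans (ler_normB _ _) _.
by rewrite -mulrA mulr_natl mulr2n lerD // (norm_path_term n p, norm_path_term n p').
Qed.

Lemma tail_small K e : 0 < e -> exists N, K * tail N < e.
Proof.
move=> e0; have : (fun N => K * tail N) @ \oo --> 0.
  rewrite -(mulr0 K) -(subrr (limn (series c))).
  by apply: cvgM; [exact: cvg_cst | apply: cvgB => //; exact: cvg_cst].
move=> /cvgr0Pnorm_lt /(_ e e0) [N _ KN]; exists N.
exact: le_lt_trans (ler_norm _) (KN N (leqnn N)).
Qed.

Local Notation G := ((nat -> 'I_d.+1) * (nat -> V))%type.

Definition cylinder_sums a N (g : G) : set V :=
  [set path_sum g'.2 | g' in [set g' : G | left_inf_path s g'.1 g'.2 a /\ prefix_agree N g g']].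

(* bj = (b, j) extends by the state b and the label of the length-j prefix of
   s_N(b); since |s_N(b)| <= L this covers every transition. *)
Definition extend N (g : G) (bj : 'I_d.+1 * 'I_L) : G :=
  (splice N.+1 g.1 (fun=> bj.1), splice N g.2 (fun=> abv R (take bj.2 (s N bj.1)))).

Lemma prefix_agree_extend N g bj : prefix_agree N g (extend N g bj).
Proof. by split=> n nN; rewrite /extend /splice /= ?ltnS nN. Qed.

Lemma cylinder_sums_extend a N g :
  cylinder_sums a N g `<=`
  \bigcup_(bj in [set: 'I_d.+1 * 'I_L]) cylinder_sums a N.+1 (extend N g bj).
Proof.
move=> _ [g' [p [ag1 ag2]] <-]; have [P [Q [sN tN]]] := p.2 N.
have PL : (size P < L)%N.
  by apply: leq_trans (s_le N (g'.1 N.+1)); rewrite sN size_cat /= addnS ltnS leq_addr.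
exists (g'.1 N.+1, Ordinal PL) => //; exists g' => //; split => //.
split=> n; rewrite /extend /splice /=.
  by rewrite leq_eqVlt => /predU1P[-> | nN]; rewrite ?ltnn // nN ag1.
rewrite ltnS leq_eqVlt => /predU1P[-> | nN]; last by rewrite nN ag2.
by rewrite ltnn tN sN take_size_cat.
Qed.

Lemma closure_cylinder_sums_extend a N g x : closure (cylinder_sums a N g) x ->
  exists g', prefix_agree N g g' /\ closure (cylinder_sums a N.+1 g') x.
Proof.
move=> /(closureS (@cylinder_sums_extend a N g)) /closure_bigcup_finite [bj cl].
by exists (extend N g bj); split => //; apply: prefix_agree_extend.
Qed.

Lemma closure_cylinder_sums_chain a g x : closure (cylinder_sums a 0 g) x ->
  exists gs : nat -> G,
    (forall N, prefix_agree N (gs N) (gs N.+1)) /\ (forall N, closure (cylinder_sums a N (gs N)) x).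
Proof.
move=> cl0; have /choice [next nextP] : forall Ng : nat * G, exists g',
    closure (cylinder_sums a Ng.1 Ng.2) x ->
    prefix_agree Ng.1 Ng.2 g' /\ closure (cylinder_sums a Ng.1.+1 g') x.
  move=> [N g']; case: (pselect (closure (cylinder_sums a N g') x)) => [cl | ncl].
    by have [g'' ?] := closure_cylinder_sums_extend cl; exists g''.
  by exists g' => /ncl.
pose gs := fix gs N := if N is N'.+1 then next (N', gs N') else g.
have cl N : closure (cylinder_sums a N (gs N)) x by elim: N => // N /(nextP (N, gs N))[].
by exists gs; split=> // N; have [] := nextP (N, gs N) (cl N).
Qed.

Lemma closed_path_sums a : closed (path_sums s v a).
Proof.
move=> x xcl; have sub : path_sums s v a `<=` cylinder_sums a 0 ((fun _ => a), (fun _ => 0)).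
  move=> _ /path_sumsE [st [t [p ->]]]; exists (st, t) => //; split => //.
  by split => // n; rewrite leqn0 => /eqP ->; apply: p.1.
have [gs [ag cl]] := closure_cylinder_sums_chain (closureS sub xcl).
pose st n := (gs n).1 n; pose t n := (gs n.+1).2 n.
have approx N e : 0 < e -> exists g' : G, [/\ left_inf_path s g'.1 g'.2 a,
    prefix_agree N (st, t) g' & `|x - path_sum g'.2| < e].
  move=> e0; have [_ [g' [p [ag1 ag2]] <-] xg'] := (closure_normP _ _).1 (cl N) e e0.
  have [d1 d2] := prefix_agree_diagonal ag N.
  by exists g'; split => //; split=> n nN; rewrite ?ag1 ?ag2 ?d1 ?d2.
have p : left_inf_path s st t a.
  split; first by have [g' [[<- _] [ag1 _] _]] := approx 0%N 1 ltr01; rewrite ag1.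
  move=> k; have [g' [[_ tr] [ag1 ag2] _]] := approx k.+1 1 ltr01.
  by have := tr k; rewrite !ag1 ?ag2 ?leqnSn.
apply/path_sumsE; exists st, t; split => //.
apply/eqP; rewrite -subr_eq0 -normr_le0; apply/ler_addgt0Pr => e e0; rewrite add0r.
have [N eN] := tail_small (2 * L%:R) (divr_gt0 e0 (ltr0Sn _ 1)).
have [g' [p' [_ ag2] xg']] := approx N (e / 2) (divr_gt0 e0 (ltr0Sn _ 1)).
apply: le_trans (ler_distD (path_sum g'.2) _ _) _; rewrite [e]splitr lerD ?ltW //.
by apply: le_lt_trans eN; apply: path_sum_dist p' p _ => n nN; rewrite ag2.
Qed.

End PathSums.

Section RauzyFractal.
Variables (R : realType) (d : nat) (s : nat -> subst d) (v : 'cV[R]_d.+1) (L : nat).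
Variable u : nat -> nat -> 'I_d.+1.
Hypothesis s_ne : forall n b, s n b != [::].
Hypothesis s_le : forall n b, (size (s n b) <= L)%N.
Hypothesis u_fix : fixed_point s u.
Let c n := opnorm1 (pimx v *m Mprod R s 0 n).
Hypothesis c_sum : cvgn (series c).
Local Notation V := 'cV[R]_d.+1.

Lemma series_splice k m (t : nat -> V) M : (k <= M)%N ->
  series (path_term s v (splice k t (dlabel R s u k m))) M =
  piv v (\sum_(0 <= n < k) Mprod R s 0 n *m t n + Mprod R s 0 k *m abv R (mkseq (u k) m)) -
  piv v (Mprod R s 0 M *m abv R (mkseq (u M) (dpos s u k m M))).
Proof.
move=> kM; rewrite /series /= /path_term /piv -mulmx_sumr -mulmxBr; congr (_ *m _).
rewrite (big_cat_nat (n := k)) //= (dpos_telescope R u_fix s_ne k m (M - k)) subnKC //.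
under eq_big_nat => n /andP[_ nk] do rewrite /splice nk.
under [X in _ + X]eq_big_nat => n /andP[kn _] do rewrite /splice ltnNge kn /=.
by rewrite (addrC (_ *m abv _ _)) addrA addrK.
Qed.

Lemma splice_series_cvg k m (t : nat -> V) :
  series (path_term s v (splice k t (dlabel R s u k m))) @ \oo -->
  piv v (\sum_(0 <= n < k) Mprod R s 0 n *m t n + Mprod R s 0 k *m abv R (mkseq (u k) m)).
Proof.
set A := piv v _.
have r0 : (fun M => piv v (Mprod R s 0 M *m abv R (mkseq (u M) (dpos s u k m M)))) @ \oo --> 0.
  apply: norm_cvg0; apply: (@squeeze_cvgr _ _ _ _ (cst 0) (fun M => c M * m%:R)).
  - near=> M; rewrite normr_ge0 /=; apply: le_trans (norm_piv_Mprod_abv _ _ _ _) _.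
    by rewrite size_mkseq ler_wpM2l ?opnorm1_ge0 // ler_nat dpos_le.
  - exact: cvg_cst.
  - by rewrite -(mul0r m%:R); apply: cvgMl; apply: cvg_series_cvg_0 c_sum.
rewrite -[A]subr0; apply: cvg_trans (near_eq_cvg _) (cvgB (cvg_cst A) r0).
near=> M; rewrite series_splice //; near: M; exact: nbhs_infty_ge.
Unshelve. all: by end_near.
Qed.

Lemma piv_Wset_sub_path_sums a : piv v @` Wset (u 0%N) a `<=` path_sums s v a.
Proof.
move=> _ [_ [m uma <-] <-].
exists (splice 0 (fun=> u 0%N m) (fun n => u n (dpos s u 0 m n))).
exists (splice 0 (fun=> 0) (dlabel R s u 0 m)).
split; first by apply: left_inf_path_splice.
have := splice_series_cvg (k := 0) (m := m) (t := fun=> 0).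
by rewrite big_geq // add0r Mprod_id mul1mx.
Qed.

Hypothesis s_prim : forall n, exists k, (n <= k)%N /\ forall i j, 0 < Mprod R s n k i j.

Lemma path_sums_sub_Rauzy_a a : path_sums s v a `<=` Rauzy_a v (u 0%N) a.
Proof.
move=> x /(path_sumsE s_le c_sum) [st [t [p ->]]]; apply/closure_normP => e e0.
have [N eN] := tail_small c_sum (2 * L%:R) e0.
have [K [NK Kpos]] := s_prim N.
have [m umN] := fixed_point_letter u_fix NK Kpos (st N).
have [p0 [up0 E]] := path_prefix_in_fixed_point u_fix p umN.
exists (piv v (abv R (mkseq (u 0%N) p0))).
  by exists (abv R (mkseq (u 0%N) p0)) => //; exists p0.
have sp := left_inf_path_splice u_fix s_ne p.1 (esym umN) (fun n _ => p.2 n).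
rewrite E -(cvg_lim _ (splice_series_cvg (k := N) (m := m) (t := t))) //.
by apply: le_lt_trans (path_sum_dist s_le c_sum p sp _) eN => n nN; rewrite /splice nN.
Qed.

Lemma Rauzy_a_path_sums a : Rauzy_a v (u 0%N) a = path_sums s v a.
Proof.
apply/seteqP; split; last exact: path_sums_sub_Rauzy_a.
by move=> x /(closureS (@piv_Wset_sub_path_sums a)); apply: closed_path_sums.
Qed.

Lemma Rauzy_compact : compact (Rauzy v (u 0%N)).
Proof.
apply: (@cV_bounded_closed_compact _ _ _ (L%:R * limn (series c))).
  by apply: closed_bigcup => [|a _]; [exact: finite_finset | exact: closed_closure].
move=> x [a _]; rewrite Rauzy_a_path_sums => /(path_sumsE s_le c_sum) [st [t [p ->]]].
exact: norm_path_sum_le p.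
Qed.

End RauzyFractal.

Theorem proposition3p29 (R : realType) (d : nat) (hd : (1 <= d)%N)
  (S : seq (subst d)) (hS : forall sigma, sigma \in S -> unimodular R sigma)
  (s : nat -> subst d) (hs : forall n, s n \in S)
  (hprim : forall n, exists k, (n <= k)%N /\ forall i j, 0 < Mprod R s n k i j)
  (v : 'cV[R]_d.+1) (hv0 : forall i, 0 <= v i ord0) (hv : v != 0)
  (hconv : cvgn (series (fun n => opnorm1 (pimx v *m Mprod R s 0 n)))) :
  (forall u, fixed_point s u -> forall a, Rauzy_a v (u 0%N) a = path_sums s v a) /\
  (forall u u', fixed_point s u -> fixed_point s u' -> Rauzy v (u 0%N) = Rauzy v (u' 0%N)) /\
  (forall u, fixed_point s u -> compact (Rauzy v (u 0%N))).
Proof.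
have s_ne n b : s n b != [::] by have [] := hS _ (hs n).
pose L := (\max_(sg <- S) \max_b size (sg b))%N.
have s_le n b : (size (s n b) <= L)%N.
  apply: leq_trans (leq_bigmax_seq (F := fun sg : subst d => \max_b size (sg b)) _ (hs n) isT).
  exact: (leq_bigmax (F := fun b => size (s n b))).
have RauzyE u : fixed_point s u -> forall a, Rauzy_a v (u 0%N) a = path_sums s v a.
  by move=> u_fix a; apply: Rauzy_a_path_sums s_ne s_le u_fix hconv hprim a.
split; [exact: RauzyE | split => [u u' uf uf' | u uf]].
  by rewrite /Rauzy; congr bigcup; apply/funext => a; rewrite !RauzyE.
exact: Rauzy_compact s_ne s_le uf hconv hprim.
Qed.
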